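(* For every integer $n\geq 2$, the graph $\mathcal{G}^3_n$ is transmission irregular, and its set of vertex transmissions equals $\{n^2+5n+10,\, n^2+5n+11,\,\dots,\, n^2+7n+16\}\cup\{n^2+8n+15\}$.
   Context: Let $G_3$ be the (disconnected) graph with vertices $a,b,c,d,e,f,g,h$ and edges $ab,ac,bc,de,dg,ef,eh,gh$. For an integer $n\ge1$, $\mathcal{G}^3_n$ is obtained from $G_3$ by adding a new path from $b$ to $d$ with $n$ new internal vertices and a new path from $c$ to $e$ with $n$ new internal vertices (each such path has length $n+1$). The transmission of a vertex $u$ in a connected graph $G$ is $Tr_G(u)=\sum_{v}d_G(u,v)$; a graph is transmission irregular if no two of its vertices have equal transmission. *)

From mathcomp Require Import all_boot.
Set Implicit Arguments. Unset Strict Implicit. Unset Printing Implicit Defensive.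

Definition walk_of_len (T : finType) (e : rel T) (k : nat) (u v : T) : bool :=
  [exists p : k.-tuple T, path e u p && (last u p == v)].

(* Distance = length of a shortest walk (equivalently shortest path).
   For a connected graph on T every distance is < #|T|, so searching
   k in [0, #|T|) is exact; [find] returns the least such k. *)
Definition gdist (T : finType) (e : rel T) (u v : T) : nat :=
  find (fun k => walk_of_len e k u v) (iota 0 #|T|).

Definition transmission (T : finType) (e : rel T) (u : T) : nat :=
  \sum_(v : T) gdist e u v.

Definition connected_graph (T : finType) (e : rel T) : Prop :=
  forall u v : T, connect e u v.

Definition transmission_irregular (T : finType) (e : rel T) : Prop :=
  injective (transmission e).

(* Vertices are 'I_(2n+8):
     0..7  = a,b,c,d,e,f,g,h
     8 .. n+7      = internal vertices of the b–d path (8 adjacent to b,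
                     n+7 adjacent to d)
     n+8 .. 2n+7   = internal vertices of the c–e path (n+8 adjacent to c,
                     2n+7 adjacent to e). *)

Definition G3_base_edges : seq (nat * nat) :=
  [:: (0,1); (0,2); (1,2); (3,4); (3,6); (4,5); (4,7); (6,7)].

Definition G3n_dir_edge (n x y : nat) : bool :=
  [|| (x, y) \in G3_base_edges,
      (x == 1) && (y == 8),
      (x == n + 7) && (y == 3),
      (x == 2) && (y == n + 8),
      (x == 2 * n + 7) && (y == 4),
      [&& 8 <= x, y == x.+1 & y < n + 8]
    | [&& n + 8 <= x, y == x.+1 & y < 2 * n + 8]].

Definition G3n_vertex (n : nat) := 'I_(2 * n + 8).

Definition G3n_adj (n : nat) : rel (G3n_vertex n) :=
  fun x y => G3n_dir_edge n x y || G3n_dir_edge n y x.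
Arguments G3n_adj n : clear implicits.

From HB Require Import structures.
From mathcomp Require Import all_boot zify.
Set Implicit Arguments. Unset Strict Implicit.

(* The vertices b, P1, d, e, P2 (reversed), c of G^3_n form a cycle C_(2n+4); a sits on
   the edge bc, f hangs at e, and g, h close the 4-cycle d g h e.  None of a, f, g, h
   shortens a path between cycle vertices, so every distance is a cycle distance plus
   the steps off the cycle.  Such a closed form is certified as the graph distance from
   u by a potential argument: it vanishes at u, grows by at most one along each edge,
   and every other vertex has a neighbour where it is one smaller.

   On C_(2m) every vertex has transmission m^2, so Tr(v) - (n+2)^2 is, for v on the
   cycle, the sum of the distances from v to a, f, g, h; along the cycle it takes each
   value n+6, ..., 3n+9 once, while h, g, f, a give 3n+10, 3n+11, 3n+12 and 4n+11,
   which is new as soon as n >= 2. *)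

Lemma find_iota0 (P : pred nat) N k :
  k < N -> P k -> (forall i, i < k -> ~~ P i) -> find P (iota 0 N) = k.
Proof.
move=> ltkN Pk minP; set j := find P _.
have hasP : has P (iota 0 N) by apply/hasP; exists k; rewrite ?mem_iota.
have ltjN : j < N by rewrite -[N](size_iota 0) -has_find.
have Pj : P j by have := nth_find 0 hasP; rewrite nth_iota.
apply/eqP; rewrite eqn_leq leqNgt [k <= j]leqNgt; apply/andP; split; apply/negP.
  by move=> /(before_find 0); rewrite nth_iota ?Pk.
by move=> /minP; rewrite Pj.
Qed.

Section PotentialDistance.
Variables (T : finType) (e : rel T) (u : T) (d : T -> nat).
Hypothesis d_u : d u = 0.
Hypothesis d_edge : forall x y, e x y -> d y <= (d x).+1.
Hypothesis d_pred : forall v, v != u -> exists2 w, e w v & (d w).+1 = d v.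

Lemma walk_of_lenP k x y :
  reflect (exists p : k.-tuple T, path e x p && (last x p == y)) (walk_of_len e k x y).
Proof. exact: existsP. Qed.

Lemma path_potential x p : path e x p -> d (last x p) <= d x + size p.
Proof.
elim: p x => [|y p IHp] x /=; first by rewrite addn0.
by case/andP=> /d_edge exy /IHp; lia.
Qed.

Lemma walk_of_len_ge k v : walk_of_len e k u v -> d v <= k.
Proof.
by case/walk_of_lenP=> p /andP[/path_potential + /eqP <-]; rewrite d_u size_tuple.
Qed.

Lemma walk_of_len_potential v : walk_of_len e (d v) u v.
Proof.
move: {-1}(d v) (erefl (d v)) => k; elim: k v => [|k IHk] v dv.
  have -> : v = u by apply/eqP/negPn/negP => /d_pred[w _]; rewrite dv.
  by apply/walk_of_lenP; exists [tuple]; rewrite /= eqxx.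
have [|w ewv dw] := d_pred (v := v); first by apply/eqP => vu; rewrite vu d_u in dv.
have /walk_of_lenP[p /andP[pw /eqP lastw]] := IHk w ltac:(lia).
apply/walk_of_lenP; exists [tuple of rcons p v].
by rewrite /= rcons_path last_rcons eqxx pw lastw ewv.
Qed.

Lemma potential_lt_card v : d v < #|T|.
Proof.
have /walk_of_lenP[p /andP[pu /eqP lastv]] := walk_of_len_potential v.
case: (shortenP pu) lastv => p' pu' uniq_p' _ lastv.
have := path_potential pu'; rewrite lastv d_u add0n => /leq_ltn_trans; apply.
by rewrite -[(size p').+1]/(size (u :: p')) -(card_uniqP uniq_p') max_card.
Qed.

Lemma gdist_potential v : gdist e u v = d v.
Proof.
apply: find_iota0; [exact: potential_lt_card | exact: walk_of_len_potential |].
by move=> i lt_i; apply/negP => /walk_of_len_ge; lia.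
Qed.

End PotentialDistance.

Definition distn (p q : nat) : nat := p - q + (q - p).
Definition cycle_dist (L p q : nat) : nat := minn (distn p q) (L - distn p q).
Definition cycle_pred (L q : nat) : nat := if q == 0 then L.-1 else q.-1.
Definition cycle_succ (L q : nat) : nat := if q == L.-1 then 0 else q.+1.

Lemma cycle_dist_pred L p q : p < L -> q < L -> p != q ->
  (cycle_dist L p (cycle_pred L q)).+1 = cycle_dist L p q \/
  (cycle_dist L p (cycle_succ L q)).+1 = cycle_dist L p q.
Proof.
rewrite /cycle_pred /cycle_succ /cycle_dist /distn => ltp ltq neq.
by case: (leqP p q) => pq; case: (leqP (p - q + (q - p)) (L - (p - q + (q - p)))) => near;
  case: ifP => ?; case: ifP => ?; first [left; lia | right; lia].
Qed.

Lemma sum_ord_halves m (F : nat -> nat) c :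
  (forall j, j < m -> F j + F (m + j) = c) -> \sum_(q < m + m) F q = m * c.
Proof.
move=> halves; rewrite big_split_ord /= -big_split /= (eq_bigr (fun _ => c)).
  by rewrite sum_nat_const card_ord.
by move=> j _; apply: halves.
Qed.

Lemma sum_ord_rotate L p (F : nat -> nat) : p < L ->
  \sum_(q < L) F (if p <= q then q - p else q + L - p) = \sum_(q < L) F q.
Proof.
move=> ltpL.
have rot_lt (q : 'I_L) : (if p <= q then q - p else q + L - p) < L.
  by have := ltn_ord q; case: ifP; lia.
have rot_inj : injective (fun q => Ordinal (rot_lt q)).
  move=> q1 q2 /(congr1 val) /=; have := ltn_ord q1; have := ltn_ord q2.
  by case: ifP; case: ifP => ? ? ? ? eq12; apply/val_inj => /=; lia.
by rewrite [RHS](reindex_inj rot_inj).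
Qed.

Lemma sum_cycle_dist m p : p < m + m -> \sum_(q < m + m) cycle_dist (m + m) p q = m * m.
Proof.
move=> ltp; rewrite (eq_bigr (fun q : 'I_(m + m) =>
  cycle_dist (m + m) 0 (if p <= q then q - p else q + (m + m) - p))); last first.
  by move=> q _; have := ltn_ord q; rewrite /cycle_dist /distn; case: ifP; lia.
rewrite (sum_ord_rotate (cycle_dist (m + m) 0)) //.
by apply: sum_ord_halves => j ltjm; rewrite /cycle_dist /distn; lia.
Qed.

(* A site of G^3_n: [OnCycle q] is the vertex at position q of the cycle
   b = 0, P1 = 1..n, d = n + 1, e = n + 2, P2 = n + 3..2n + 2 (from e to c), c = 2n + 3. *)
Inductive g3site := OnCycle of nat | SiteA | SiteF | SiteG | SiteH.

Definition g3site_code (s : g3site) : nat + nat :=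
  match s with OnCycle q => inl q | SiteA => inr 0 | SiteF => inr 1 | SiteG => inr 2
  | SiteH => inr 3 end.
Definition g3site_decode (c : nat + nat) : option g3site :=
  match c with inl q => Some (OnCycle q) | inr 0 => Some SiteA | inr 1 => Some SiteF
  | inr 2 => Some SiteG | inr 3 => Some SiteH | inr _ => None end.
Lemma g3site_codeK : pcancel g3site_code g3site_decode. Proof. by case. Qed.
HB.instance Definition _ := Equality.copy g3site (pcan_type g3site_codeK).

Section Sites.
Variable n : nat.
Local Notation L := (2 * n + 4).

Definition cycle_pos (x : nat) : nat :=
  if x == 1 then 0 else if x == 2 then 2 * n + 3 else if x == 3 then n + 1
  else if x == 4 then n + 2 else if x < n + 8 then x - 7 else 3 * n + 10 - x.

Definition site_of (x : nat) : g3site :=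
  if x == 0 then SiteA else if x == 5 then SiteF else if x == 6 then SiteG
  else if x == 7 then SiteH else OnCycle (cycle_pos x).

Definition vertex_of (s : g3site) : nat :=
  match s with
  | SiteA => 0 | SiteF => 5 | SiteG => 6 | SiteH => 7
  | OnCycle q => if q == 0 then 1 else if q == 2 * n + 3 then 2 else if q == n + 1 then 3
                 else if q == n + 2 then 4 else if q <= n then q + 7 else 3 * n + 10 - q
  end.

Definition is_site (s : g3site) : bool := if s is OnCycle q then q < L else true.

Variant site_of_spec (x : nat) : g3site -> Type :=
  | SiteOfA of x = 0 : site_of_spec x SiteA
  | SiteOfF of x = 5 : site_of_spec x SiteF
  | SiteOfG of x = 6 : site_of_spec x SiteG
  | SiteOfH of x = 7 : site_of_spec x SiteH
  | SiteOfB of x = 1 : site_of_spec x (OnCycle 0)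
  | SiteOfC of x = 2 : site_of_spec x (OnCycle (2 * n + 3))
  | SiteOfD of x = 3 : site_of_spec x (OnCycle (n + 1))
  | SiteOfE of x = 4 : site_of_spec x (OnCycle (n + 2))
  | SiteOfP1 of 8 <= x < n + 8 : site_of_spec x (OnCycle (x - 7))
  | SiteOfP2 of n + 8 <= x : site_of_spec x (OnCycle (3 * n + 10 - x)).

Lemma site_ofP x : site_of_spec x (site_of x).
Proof.
rewrite /site_of /cycle_pos.
do 8 (case: ifP => [/eqP ->|?]; first by constructor).
by case: ifP => ?; [apply: SiteOfP1 | apply: SiteOfP2]; lia.
Qed.

Lemma site_of_is_site x : x < 2 * n + 8 -> is_site (site_of x).
Proof. by case: site_ofP => //=; lia. Qed.

Lemma site_ofK x : x < 2 * n + 8 -> vertex_of (site_of x) = x.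
Proof. by move=> ltx; case: site_ofP => //= ?; subst; repeat case: ifP; lia. Qed.

Lemma vertex_ofK s : is_site s -> site_of (vertex_of s) = s.
Proof.
case: s => //= q ltq; repeat case: ifP => ?;
  by case: site_ofP => ?; first [congr OnCycle; lia | exfalso; lia].
Qed.

Lemma vertex_of_lt s : is_site s -> vertex_of s < 2 * n + 8.
Proof. by case: s => //= q; repeat case: ifP; lia. Qed.

Definition attached (s : g3site) (q : nat) : bool :=
  match s with
  | OnCycle _ => false
  | SiteA => (q == 0) || (q == 2 * n + 3)
  | SiteF | SiteH => q == n + 2
  | SiteG => q == n + 1
  end.

Definition site_adj (s t : g3site) : bool :=
  match s, t with
  | OnCycle p, OnCycle q => [|| q == p.+1, p == q.+1, (p == 0) && (q == 2 * n + 3)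
                                | (q == 0) && (p == 2 * n + 3)]
  | OnCycle q, s | s, OnCycle q => attached s q
  | SiteG, SiteH | SiteH, SiteG => true
  | _, _ => false
  end.

Lemma site_adjC s t : site_adj s t = site_adj t s.
Proof. by case: s => [p||||]; case: t => [q||||] //=; apply/idP/idP; lia. Qed.

(* Off the cycle: one step to the attachment vertex, then the cycle distance from it,
   which for d and e is at most n + 2 and so never wraps around. *)
Definition attach_dist (s : g3site) (q : nat) : nat :=
  match s with
  | OnCycle p => cycle_dist L p q
  | SiteA => (minn q (2 * n + 3 - q)).+1
  | SiteF | SiteH => (distn (n + 2) q).+1
  | SiteG => (distn (n + 1) q).+1
  end.

Definition site_dist (s t : g3site) : nat :=
  match s, t with
  | _, OnCycle q => attach_dist s q
  | OnCycle p, _ => attach_dist t p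
  | SiteA, SiteA | SiteF, SiteF | SiteG, SiteG | SiteH, SiteH => 0
  | SiteA, _ | _, SiteA => n + 3
  | SiteF, SiteG | SiteG, SiteF => 3
  | SiteF, SiteH | SiteH, SiteF => 2
  | _, _ => 1
  end.

Lemma site_dist_refl s : site_dist s s = 0.
Proof. by case: s => //= p; rewrite /cycle_dist /distn; lia. Qed.

Lemma site_dist_adj s t w : is_site s -> is_site t -> is_site w -> site_adj t w ->
  site_dist s w <= (site_dist s t).+1.
Proof.
by case: s => [p||||]; case: t => [q||||]; case: w => [r||||] //=;
  rewrite /cycle_dist /distn; lia.
Qed.

Lemma site_dist_pred_cycle s q : is_site s -> q < L -> s != OnCycle q ->
  exists2 w, is_site w && site_adj w (OnCycle q) & (site_dist s w).+1 = site_dist s (OnCycle q).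
Proof.
move=> s_site ltq neq; have [attq|not_attq] := boolP (attached s q).
  by exists s; rewrite ?site_dist_refl; case: s s_site attq {neq} => //= *; rewrite /distn; lia.
have adj_pred : site_adj (OnCycle (cycle_pred L q)) (OnCycle q).
  by rewrite /cycle_pred /=; case: ifP; lia.
have adj_succ : site_adj (OnCycle (cycle_succ L q)) (OnCycle q).
  by rewrite /cycle_succ /=; case: ifP; lia.
have pred_lt : cycle_pred L q < L by rewrite /cycle_pred; case: ifP; lia.
have succ_lt : cycle_succ L q < L by rewrite /cycle_succ; case: ifP; lia.
suff [via_pred|via_succ] : (site_dist s (OnCycle (cycle_pred L q))).+1 = site_dist s (OnCycle q)
  \/ (site_dist s (OnCycle (cycle_succ L q))).+1 = site_dist s (OnCycle q).
- by exists (OnCycle (cycle_pred L q)); rewrite //= pred_lt.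
- by exists (OnCycle (cycle_succ L q)); rewrite //= succ_lt.
case: s s_site neq not_attq => [p||||] /=.
  by move=> ltp neq _; apply: cycle_dist_pred => //; apply: contraNneq neq => ->.
all: by rewrite /cycle_pred /cycle_succ /distn; case: ifP; case: ifP; lia.
Qed.

Lemma site_dist_pred s t : is_site s -> is_site t -> s != t ->
  exists2 w, is_site w && site_adj w t & (site_dist s w).+1 = site_dist s t.
Proof.
case: t => [q||||] s_site t_site neq; first exact: site_dist_pred_cycle.
- have [via_b|via_c] : (site_dist s (OnCycle 0)).+1 = site_dist s SiteA \/
    (site_dist s (OnCycle (2 * n + 3))).+1 = site_dist s SiteA.
    by case: s s_site neq => [p||||] //=; rewrite /cycle_dist /distn; lia.
  + by exists (OnCycle 0); rewrite //=; lia.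
  + by exists (OnCycle (2 * n + 3)); rewrite //=; lia.
- exists (OnCycle (n + 2)); first by rewrite /=; lia.
  by case: s s_site neq => [p||||] //=; rewrite /cycle_dist /distn; lia.
- have [via_d|via_h] : (site_dist s (OnCycle (n + 1))).+1 = site_dist s SiteG \/
    (site_dist s SiteH).+1 = site_dist s SiteG.
    by case: s s_site neq => [p||||] //=; rewrite /cycle_dist /distn; lia.
  + by exists (OnCycle (n + 1)); rewrite //=; lia.
  + by exists SiteH.
- have [via_e|via_g] : (site_dist s (OnCycle (n + 2))).+1 = site_dist s SiteH \/
    (site_dist s SiteG).+1 = site_dist s SiteH.
    by case: s s_site neq => [p||||] //=; rewrite /cycle_dist /distn; lia.
  + by exists (OnCycle (n + 2)); rewrite //=; lia.
  + by exists SiteG.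
Qed.

Lemma site_of_inj : injective (fun v : G3n_vertex n => site_of v).
Proof. by move=> u v eq_uv; apply/val_inj; rewrite /= -(site_ofK (ltn_ord u)) eq_uv site_ofK. Qed.

Definition g3sites : seq g3site := [:: SiteA, SiteF, SiteG, SiteH & map OnCycle (iota 0 L)].

Lemma mem_g3sites s : (s \in g3sites) = is_site s.
Proof. by case: s => [q||||] //; rewrite !inE /= mem_map ?mem_iota //; move=> ? ? []. Qed.

Lemma perm_g3sites : perm_eq [seq site_of v | v : G3n_vertex n] g3sites.
Proof.
apply: uniq_perm.
- by rewrite map_inj_uniq ?enum_uniq //; exact: site_of_inj.
- rewrite /= map_inj_uniq ?iota_uniq ?andbT; last by move=> ? ? [].
  by rewrite !inE /=; apply/and4P; split; apply/mapP => -[].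
move=> s; rewrite mem_g3sites; apply/imageP/idP => [[v _ ->]|s_site].
  exact: site_of_is_site.
by exists (Ordinal (vertex_of_lt s_site)); rewrite //= vertex_ofK.
Qed.

Definition tr_excess (s : g3site) : nat :=
  match s with
  | OnCycle p => if p <= n + 1 then 3 * n + 9 - 2 * p else 2 * p - n + 2
  | SiteA => 4 * n + 11 | SiteF => 3 * n + 12 | SiteG => 3 * n + 11 | SiteH => 3 * n + 10
  end.

Lemma sum_site_dist t : is_site t ->
  \sum_(s <- g3sites) site_dist t s = (n + 2) * (n + 2) + tr_excess t.
Proof.
rewrite /g3sites; have -> : iota 0 L = index_iota 0 L by rewrite /index_iota subn0.
rewrite !big_cons big_map big_mkord.
have L_halves : L = (n + 2) + (n + 2) by lia.
have sum_halves c : (forall j, j < n + 2 ->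
    site_dist t (OnCycle j) + site_dist t (OnCycle (n + 2 + j)) = c) ->
  \sum_(q < L) site_dist t (OnCycle q) = (n + 2) * c.
  by rewrite L_halves; apply: (sum_ord_halves (F := fun q => site_dist t (OnCycle q))).
case: t sum_halves => [p||||] sum_halves /= t_site.
- by rewrite L_halves sum_cycle_dist -?L_halves; [case: ifP; rewrite /distn; lia | lia].
- by rewrite (sum_halves (n + 3)) => [|j ltj /=]; lia.
- by rewrite (sum_halves (n + 4)) => [|j ltj /=]; rewrite /distn; lia.
- by rewrite (sum_halves (n + 4)) => [|j ltj /=]; rewrite /distn; lia.
- by rewrite (sum_halves (n + 4)) => [|j ltj /=]; rewrite /distn; lia.
Qed.

Lemma tr_excess_inj s t : 1 < n -> is_site s -> is_site t ->
  tr_excess s = tr_excess t -> s = t.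
Proof.
move=> n_gt1; case: s => [p||||]; case: t => [q||||] //=; repeat case: ifP => ?;
  by move=> *; first [congr OnCycle; lia | exfalso; lia].
Qed.

Lemma tr_excess_range t :
  (exists2 s, is_site s & tr_excess s = t) <-> (n + 6 <= t <= 3 * n + 12 \/ t = 4 * n + 11).
Proof.
split=> [[[p||||] //= s_site <-]|t_range]; try lia; first by case: ifP; lia.
case: (ltnP (3 * n + 9) t) => [t_big|t_cycle].
  have : t = 3 * n + 10 \/ t = 3 * n + 11 \/ t = 3 * n + 12 \/ t = 4 * n + 11 by lia.
  by case=> [->|[->|[->|->]]]; [exists SiteH | exists SiteG | exists SiteF | exists SiteA].
have [odd_tn|even_tn] := boolP ((t + n) %% 2 == 1).
  by exists (OnCycle ((3 * n + 9 - t) %/ 2)) => /=; [|case: ifP]; lia.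
by exists (OnCycle ((t + n - 2) %/ 2)) => /=; [|case: ifP]; lia.
Qed.

Hypothesis n_gt0 : 0 < n.

Lemma site_adj_of_edge x y : G3n_dir_edge n x y -> site_adj (site_of x) (site_of y).
Proof.
rewrite /G3n_dir_edge /G3_base_edges !inE !xpair_eqE.
by repeat case/orP; first [move=> /andP[/eqP-> /eqP->] | move=> /and3P[? /eqP-> ?]];
  case: site_ofP => ?; case: site_ofP => ? /=; lia.
Qed.

Lemma G3n_edge_base x y : (x, y) \in G3_base_edges -> G3n_dir_edge n x y.
Proof. by rewrite /G3n_dir_edge => ->. Qed.

Lemma G3n_edge_joins x y :
  [|| (x == 1) && (y == 8), (x == n + 7) && (y == 3), (x == 2) && (y == n + 8)
    | (x == 2 * n + 7) && (y == 4)] -> G3n_dir_edge n x y.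
Proof. by rewrite /G3n_dir_edge; case/or4P => ->; rewrite /= ?orbT. Qed.

Lemma G3n_edge_paths x y :
  [&& 8 <= x, y == x.+1 & y < n + 8] || [&& n + 8 <= x, y == x.+1 & y < 2 * n + 8] ->
  G3n_dir_edge n x y.
Proof. by rewrite /G3n_dir_edge; case/orP => ->; rewrite /= ?orbT. Qed.

Local Ltac G3n_edge :=
  first [by apply: G3n_edge_base | apply: G3n_edge_joins; lia | apply: G3n_edge_paths; lia].

Lemma edge_of_site_adj x y : x < 2 * n + 8 -> y < 2 * n + 8 ->
  site_adj (site_of x) (site_of y) -> G3n_dir_edge n x y || G3n_dir_edge n y x.
Proof.
move=> ltx lty; case: site_ofP => ex; case: site_ofP => ey /=;
  by (repeat case/orP) => adj //; subst; apply/orP; first [left; G3n_edge | right; G3n_edge].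
Qed.

Lemma G3n_adjE (x y : G3n_vertex n) : G3n_adj n x y = site_adj (site_of x) (site_of y).
Proof.
apply/idP/idP => [/orP[]|]; first exact: site_adj_of_edge.
  by rewrite site_adjC; apply: site_adj_of_edge.
exact: edge_of_site_adj (ltn_ord x) (ltn_ord y).
Qed.

Lemma gdist_G3n (u v : G3n_vertex n) :
  gdist (G3n_adj n) u v = site_dist (site_of u) (site_of v).
Proof.
apply: (gdist_potential (d := fun v : G3n_vertex n => site_dist (site_of u) (site_of v))).
- exact: site_dist_refl.
- move=> x y; rewrite G3n_adjE; apply: site_dist_adj; exact: site_of_is_site.
move=> {}v neq_vu.
have neq_site : site_of u != site_of v by apply: contra neq_vu => /eqP/site_of_inj ->.
have [w /andP[w_site adj_w] dw] :=
  site_dist_pred (site_of_is_site (ltn_ord u)) (site_of_is_site (ltn_ord v)) neq_site.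
by exists (Ordinal (vertex_of_lt w_site)); rewrite ?G3n_adjE /= vertex_ofK.
Qed.

Lemma transmission_g3sites (u : G3n_vertex n) :
  transmission (G3n_adj n) u = \sum_(s <- g3sites) site_dist (site_of u) s.
Proof.
rewrite -(perm_big _ perm_g3sites) big_image /transmission.
by apply: eq_bigr => v _; rewrite gdist_G3n.
Qed.

Lemma transmission_G3n (u : G3n_vertex n) :
  transmission (G3n_adj n) u = (n + 2) * (n + 2) + tr_excess (site_of u).
Proof. by rewrite transmission_g3sites sum_site_dist // site_of_is_site. Qed.

End Sites.

Theorem proposition3 (n : nat) (hn : 2 <= n) :
  transmission_irregular (G3n_adj n) /\
  (forall k : nat,
     (exists v : G3n_vertex n, transmission (G3n_adj n) v = k) <->
     ((n ^ 2 + 5 * n + 10 <= k <= n ^ 2 + 7 * n + 16) \/ k = n ^ 2 + 8 * n + 15)).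
Proof.
have n_gt0 : 0 < n by lia.
have sq : n ^ 2 = n * n by rewrite mulnn.
split=> [u v|k].
  rewrite !(transmission_G3n n_gt0) => /addnI /tr_excess_inj eq_sites.
  by apply: site_of_inj; apply: eq_sites => //; apply: site_of_is_site.
rewrite sq; split=> [[v <-]|k_range].
  have /tr_excess_range : exists2 s, is_site n s & tr_excess n s = tr_excess n (site_of n v).
    by exists (site_of n v) => //; apply: site_of_is_site.
  by rewrite transmission_G3n //; lia.
have /tr_excess_range[s s_site excess_s] : n + 6 <= k - (n + 2) * (n + 2) <= 3 * n + 12
    \/ k - (n + 2) * (n + 2) = 4 * n + 11 by lia.
exists (Ordinal (vertex_of_lt s_site)).
by rewrite transmission_G3n //= vertex_ofK // excess_s; lia.
Qed.
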